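(* Let $a,b,C\in\mathbb{R}$ with $b>1$, $C>0$, and let $(W_k)_{k\ge1}$ be real numbers with $|W_k|<\frac{C\log^a(2k+1)}{k^b}$ for all $k\in\mathbb{N}$. Then $$\lim_{n\to\infty}\sum_{k=1}^{n}|W_k|\left(\frac{2}{\pi}-\frac{n}{2^{4n-2}}\binom{2n}{n}\binom{2n-1}{n-k}\right)=0.$$ *)

From Stdlib Require Export Reals.
From Coquelicot Require Export Coquelicot.
Open Scope R_scope.

(* Binom n k : the binomial coefficient n choose k, as a real number
   (Stdlib's Binomial.C, valid for k <= n, which is always the case below). *)
Definition Binom (n k : nat) : R := Binomial.C n k.

Definition kern (n k : nat) : R :=
  INR n / 2 ^ (4 * n - 2) * Binom (2 * n) n * Binom (2 * n - 1) (n - k).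

(* The ratio recurrence [kern n (k+1) (n+k) = kern n k (n-k)] makes [kern n k] decrease in [k]
   from [kern n 0 = 2n (binom(2n,n)/4^n)^2], and also gives [kern n k >= kern n 0 (1 - k^2/n)].
   Squeezing the Wallis integrals of [sin^2n] between those of [sin^(2n-1)] and [sin^(2n+1)]
   yields [2/PI - 1/n <= kern n 0 <= 2/PI], hence [0 <= 2/PI - kern n k <= 2 min(1, k^2/n)
   <= 2 k^(2e) n^-e] for any [0 < e <= 1].  The hypothesis gives [|W k| = O(k^-(1+3e))] for
   small [e], so the n-th sum is at most a constant times [n^-e sum_k k^-(1+e)], and the
   series [sum_k k^-(1+e)] is bounded by [1 + 1/e] by telescoping against [k^-e]. *)

From Stdlib Require Import Reals Factorial Lra Lia Nsatz.
From Coquelicot Require Import Coquelicot.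
Open Scope R_scope.

Lemma exp_le_exp x y : x <= y -> exp x <= exp y.
Proof. intros [H | ->]; [apply Rlt_le, exp_increasing, H | apply Rle_refl]. Qed.

Lemma ln_le_sub_1 u : 0 < u -> ln u <= u - 1.
Proof. intros Hu. pose proof (exp_ineq1_le (ln u)). rewrite exp_ln in H; lra. Qed.

Lemma Rmin_1_le_Rpower x th : 0 < x -> 0 < th <= 1 -> Rmin 1 x <= Rpower x th.
Proof.
  intros Hx Hth. unfold Rpower. destruct (Rle_lt_dec 1 x) as [H1 | H1].
  - assert (0 <= ln x) by (rewrite <- ln_1; apply ln_le; lra).
    apply Rle_trans with 1; [apply Rmin_l | rewrite <- exp_0; apply exp_le_exp; nra].
  - assert (ln x < 0) by (rewrite <- ln_1; apply ln_increasing; lra).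
    rewrite <- (exp_ln x) at 1 by exact Hx.
    apply Rle_trans with (exp (ln x)); [apply Rmin_r | apply exp_le_exp; nra].
Qed.

(* Comparing [x^-t] and [(x+1)^-t] through [exp (t * ln ((x+1)/x)) >= 1 + t / (x+1)]. *)
Lemma Rpower_telescope x t : 1 <= x -> 0 < t ->
  Rpower (x + 1) (- (1 + t)) <= (Rpower x (- t) - Rpower (x + 1) (- t)) / t.
Proof.
  intros Hx Ht.
  assert (Hln : / (x + 1) <= ln (x + 1) - ln x).
  { pose proof (ln_le_sub_1 (x / (x + 1)) ltac:(apply Rdiv_lt_0_compat; lra)) as L.
    rewrite ln_div in L by lra.
    replace (x / (x + 1) - 1) with (- / (x + 1)) in L by (field; lra). lra. }
  set (p := Rpower (x + 1) (- t)).
  assert (Hp : 0 < p) by apply exp_pos.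
  assert (E1 : Rpower (x + 1) (- (1 + t)) = p / (x + 1)).
  { unfold p, Rpower.
    replace (- (1 + t) * ln (x + 1)) with (- t * ln (x + 1) + - ln (x + 1)) by ring.
    rewrite exp_plus, exp_Ropp, exp_ln by lra. reflexivity. }
  assert (E2 : Rpower x (- t) = p * exp (t * (ln (x + 1) - ln x))).
  { unfold p, Rpower. rewrite <- exp_plus. f_equal. ring. }
  pose proof (exp_ineq1_le (t * (ln (x + 1) - ln x))).
  assert (t / (x + 1) <= t * (ln (x + 1) - ln x)) by (apply Rmult_le_compat_l; lra).
  rewrite E1, E2.
  apply (Rmult_le_reg_r t); [exact Ht|].
  replace (p / (x + 1) * t) with (p * (t / (x + 1))) by (field; lra).
  replace ((p * exp (t * (ln (x + 1) - ln x)) - p) / t * t)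
    with (p * (exp (t * (ln (x + 1) - ln x)) - 1)) by (field; lra).
  apply Rmult_le_compat_l; lra.
Qed.

Lemma sum_Rpower_le t n : 0 < t ->
  sum_n_m (fun k => Rpower (INR k) (- (1 + t))) 1 n <= 1 + / t.
Proof.
  intros Ht.
  assert (Hpartial : forall m, (1 <= m)%nat ->
    sum_n_m (fun k => Rpower (INR k) (- (1 + t))) 1 m <= 1 + (1 - Rpower (INR m) (- t)) / t).
  { induction m as [|m IH]; intros Hm; [lia|].
    destruct (Nat.eq_dec m 0) as [-> | Hm0].
    - rewrite sum_n_n. simpl (INR 1). unfold Rpower. rewrite ln_1, !Rmult_0_r, exp_0.
      unfold Rdiv. lra.
    - rewrite sum_n_Sm, S_INR by lia. unfold plus; simpl.
      assert (1 <= INR m) by (apply (le_INR 1); lia).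
      pose proof (Rpower_telescope (INR m) t ltac:(lra) Ht).
      specialize (IH ltac:(lia)).
      replace (1 + (1 - Rpower (INR m + 1) (- t)) / t)
        with (1 + (1 - Rpower (INR m) (- t)) / t
              + (Rpower (INR m) (- t) - Rpower (INR m + 1) (- t)) / t) by (field; lra).
      lra. }
  destruct n as [|n].
  - rewrite sum_n_m_zero by lia. pose proof (Rinv_0_lt_compat t Ht). unfold zero; simpl; lra.
  - apply Rle_trans with (1 + (1 - Rpower (INR (S n)) (- t)) / t); [apply Hpartial; lia|].
    assert (0 < Rpower (INR (S n)) (- t)) by apply exp_pos.
    pose proof (Rinv_0_lt_compat t Ht).
    unfold Rdiv. apply Rplus_le_compat_l. rewrite <- (Rmult_1_l (/ t)) at 2.
    apply Rmult_le_compat_r; lra.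
Qed.

Lemma ln_le_mul_sub eps z : 0 < eps -> 0 < z -> ln z <= eps * z - 1 - ln eps.
Proof.
  intros He Hz. pose proof (ln_le_sub_1 (eps * z) ltac:(nra)) as L.
  rewrite ln_mult in L by lra. lra.
Qed.

Lemma Rpower_ln_le_Rpower a d : 0 < d ->
  exists c, 0 < c /\ forall x, 1 <= x -> Rpower (ln (2 * x + 1)) a <= c * Rpower x d.
Proof.
  intros Hd.
  assert (Hz : forall x, 1 <= x -> 1 <= ln (2 * x + 1)).
  { intros x Hx. rewrite <- (ln_exp 1) at 1. pose proof exp_le_3.
    apply ln_le; [apply exp_pos | lra]. }
  assert (Hlnx : forall x, 1 <= x -> 0 <= ln x) by (intros; rewrite <- ln_1; apply ln_le; lra).
  unfold Rpower. destruct (Rle_lt_dec a 0) as [Ha | Ha].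
  - exists 1. split; [lra|]. intros x Hx.
    assert (0 <= ln (ln (2 * x + 1))) by (apply Hlnx, Hz, Hx).
    pose proof (Hlnx x Hx).
    rewrite Rmult_1_l. apply exp_le_exp. nra.
  - set (eta := d / a). assert (Heta : 0 < eta) by (apply Rdiv_lt_0_compat; lra).
    exists (exp (d * ln 3 - a - a * ln eta)). split; [apply exp_pos|]. intros x Hx.
    rewrite <- exp_plus. apply exp_le_exp.
    pose proof (Hz x Hx). set (z := ln (2 * x + 1)) in *.
    assert (Z : z <= ln 3 + ln x) by (unfold z; rewrite <- ln_mult by lra; apply ln_le; lra).
    pose proof (ln_le_mul_sub eta z Heta ltac:(lra)).
    assert (a * eta = d) by (unfold eta; field; lra).
    nra.
Qed.

Lemma is_lim_seq_Rpower_neg th : 0 < th -> is_lim_seq (fun n => Rpower (INR n) (- th)) 0.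
Proof.
  intros Hth. unfold Rpower.
  apply (filterlim_comp _ _ _ (fun n => - th * ln (INR n)) exp _ (Rbar_locally m_infty));
    [|apply is_lim_exp_m].
  apply (filterlim_comp _ _ _ (fun n => ln (INR n)) (fun y => - th * y) _ (Rbar_locally p_infty)).
  - eapply filterlim_comp; [apply is_lim_seq_INR | apply is_lim_ln_p].
  - replace m_infty with (Rbar_mult (- th) p_infty).
    + apply (is_lim_scal_l (fun y => y) (- th) p_infty p_infty), is_lim_id.
    + simpl. destruct (Rle_dec 0 (- th)); [exfalso; lra | reflexivity].
Qed.

Lemma sum_n_m_le_loc (u v : nat -> R) n m :
  (forall k, (n <= k <= m)%nat -> u k <= v k) -> sum_n_m u n m <= sum_n_m v n m.
Proof.
  intros Huv.
  rewrite (sum_n_m_ext_loc u (fun k => Rmin (u k) (v k)))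
    by (intros k Hk; rewrite Rmin_left; auto).
  apply sum_n_m_le. intros; apply Rmin_r.
Qed.

Lemma is_lim_seq_sum_n_m_dominated (f : nat -> nat -> R) (B g : nat -> R) (G : R) :
  (forall n k, (1 <= k <= n)%nat -> 0 <= f n k <= B n * g k) ->
  (forall n, sum_n_m g 1 n <= G) -> (forall n, 0 <= B n) -> is_lim_seq B 0 ->
  is_lim_seq (fun n => sum_n_m (f n) 1 n) 0.
Proof.
  intros Hf Hg HB0 HB.
  apply is_lim_seq_le_le with (u := fun _ => 0) (w := fun n => B n * G).
  - intros n. split.
    + replace 0 with (sum_n_m (fun _ => 0) 1 n)
        by apply (sum_n_m_const_zero (G := R_AbelianMonoid)).
      apply sum_n_m_le_loc. intros k Hk. apply Hf; exact Hk.
    + apply Rle_trans with (sum_n_m (fun k => B n * g k) 1 n).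
      * apply sum_n_m_le_loc. intros k Hk. apply Hf; exact Hk.
      * rewrite (sum_n_m_mult_l (K := R_Ring)). apply Rmult_le_compat_l; [apply HB0 | apply Hg].
  - apply is_lim_seq_const.
  - replace (Finite 0) with (Rbar_mult 0 G) by (simpl; f_equal; ring).
    apply is_lim_seq_scal_r, HB.
Qed.

Definition wallis (n : nat) : R := RInt (fun x => sin x ^ n) 0 (PI / 2).

Lemma continuous_sin_pow n x : continuous (fun x => sin x ^ n) x.
Proof.
  apply (continuous_comp sin (fun y => y ^ n)).
  - apply continuity_pt_filterlim, continuity_sin.
  - apply continuity_pt_filterlim, derivable_continuous_pt, derivable_pt_pow.
Qed.

Lemma ex_RInt_sin_pow n : ex_RInt (fun x => sin x ^ n) 0 (PI / 2).
Proof. apply (@ex_RInt_continuous R_CompleteNormedModule); intros; apply continuous_sin_pow. Qed.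

Lemma wallis_0 : wallis 0 = PI / 2.
Proof. unfold wallis; simpl. rewrite RInt_const. unfold scal; simpl; unfold mult; simpl; ring. Qed.

Lemma wallis_1 : wallis 1 = 1.
Proof.
  unfold wallis. apply is_RInt_unique.
  replace 1 with (minus (- cos (PI / 2)) (- cos 0))
    by (rewrite cos_PI2, cos_0; unfold minus, plus, opp; simpl; ring).
  apply (@is_RInt_derive R_CompleteNormedModule (fun x => - cos x)).
  - intros. auto_derive; [auto | ring].
  - intros. apply continuous_sin_pow.
Qed.

(* [(n+2) sin^(n+2) - (n+1) sin^n] is the derivative of [- cos x * sin x ^ (n+1)],
   which vanishes at [0] and [PI/2]. *)
Lemma wallis_SS n : INR (S (S n)) * wallis (S (S n)) = INR (S n) * wallis n.
Proof.
  set (f := fun x => minus (scal (INR (S (S n))) (sin x ^ S (S n))) (scal (INR (S n)) (sin x ^ n))).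
  set (F := fun x => - cos x * sin x ^ S n).
  assert (HF : minus (F (PI / 2)) (F 0) = 0).
  { unfold F. rewrite cos_PI2, sin_0. unfold minus, plus, opp; simpl. ring. }
  assert (Hf : RInt f 0 (PI / 2) = 0).
  { rewrite <- HF at 2. apply is_RInt_unique, (@is_RInt_derive R_CompleteNormedModule F).
    - intros x _. unfold F. auto_derive; [auto|].
      unfold f, minus, plus, opp, scal; simpl; unfold mult; simpl.
      pose proof (sin2 x) as S2. unfold Rsqr in S2.
      change (match n with 0%nat => 1 | S _ => INR n + 1 end) with (INR (S n)).
      rewrite S_INR. nsatz.
    - intros. apply (continuous_minus (V := R_NormedModule));
        apply (continuous_scal_r (V := R_NormedModule)), continuous_sin_pow. }
  unfold f in Hf. clear f F HF.
  rewrite (@RInt_minus R_CompleteNormedModule) in Hf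
    by apply (@ex_RInt_scal R_CompleteNormedModule), ex_RInt_sin_pow.
  rewrite !(@RInt_scal R_CompleteNormedModule) in Hf by apply ex_RInt_sin_pow.
  assert (H : INR (S (S n)) * wallis (S (S n)) - INR (S n) * wallis n = 0) by exact Hf.
  lra.
Qed.

Lemma wallis_S_le n : wallis (S n) <= wallis n.
Proof.
  pose proof PI_RGT_0.
  apply RInt_le; try apply ex_RInt_sin_pow; [lra|].
  intros x Hx.
  assert (0 <= sin x) by (apply sin_ge_0; lra).
  pose proof (SIN_bound x).
  pose proof (pow_le (sin x) n ltac:(lra)).
  simpl; nra.
Qed.

Lemma Binom_pos n k : (k <= n)%nat -> 0 < Binom n k.
Proof.
  intros. unfold Binom, Binomial.C.
  apply Rdiv_lt_0_compat; [|apply Rmult_lt_0_compat]; apply INR_fact_lt_0.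
Qed.

Definition central_binom_ratio (n : nat) : R := Binom (2 * n) n / 2 ^ (2 * n).

Lemma central_binom_ratio_pos n : 0 < central_binom_ratio n.
Proof. apply Rdiv_lt_0_compat; [apply Binom_pos; lia | apply pow_lt; lra]. Qed.

Lemma central_binom_ratio_S n :
  central_binom_ratio (S n) * (2 * INR n + 2) = central_binom_ratio n * (2 * INR n + 1).
Proof.
  unfold central_binom_ratio, Binom, Binomial.C.
  replace (2 * S n - S n)%nat with (S n) by lia.
  replace (2 * n - n)%nat with n by lia.
  replace (2 * S n)%nat with (S (S (2 * n))) by lia.
  change (fact (S (S (2 * n)))) with (S (S (2 * n)) * (S (2 * n) * fact (2 * n)))%nat.
  change (fact (S n)) with (S n * fact n)%nat.
  rewrite !mult_INR, <- !tech_pow_Rmult, !S_INR, mult_INR.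
  pose proof (INR_fact_lt_0 n). pose proof (INR_fact_lt_0 (2 * n)).
  pose proof (pos_INR n). pose proof (pow_lt 2 (2 * n) ltac:(lra)).
  simpl (INR 2). field. repeat split; lra.
Qed.

Lemma wallis_even n : wallis (2 * n) = PI / 2 * central_binom_ratio n.
Proof.
  induction n as [|n IH].
  - simpl (2 * 0)%nat. rewrite wallis_0.
    unfold central_binom_ratio, Binom, Binomial.C. simpl. field.
  - pose proof (wallis_SS (2 * n)) as R. pose proof (central_binom_ratio_S n) as W.
    pose proof (pos_INR n).
    replace (2 * S n)%nat with (S (S (2 * n))) by lia.
    rewrite IH, !S_INR, mult_INR in R. simpl (INR 2) in R.
    apply (Rmult_eq_reg_l (2 * INR n + 2)); [|lra].
    replace ((2 * INR n + 2) * (PI / 2 * central_binom_ratio (S n)))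
      with (PI / 2 * (central_binom_ratio (S n) * (2 * INR n + 2))) by ring.
    rewrite W. lra.
Qed.

Lemma wallis_odd n : wallis (S (2 * n)) = / ((2 * INR n + 1) * central_binom_ratio n).
Proof.
  induction n as [|n IH].
  - simpl (S (2 * 0)). rewrite wallis_1.
    unfold central_binom_ratio, Binom, Binomial.C. simpl. field.
  - pose proof (wallis_SS (S (2 * n))) as R. pose proof (central_binom_ratio_S n) as W.
    pose proof (pos_INR n). pose proof (central_binom_ratio_pos n).
    pose proof (central_binom_ratio_pos (S n)).
    replace (S (2 * S n)) with (S (S (S (2 * n)))) by lia.
    rewrite IH, !S_INR, mult_INR in R. simpl (INR 2) in R.
    rewrite S_INR.
    assert (WS : central_binom_ratio (S n)
                 = central_binom_ratio n * (2 * INR n + 1) / (2 * INR n + 2))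
      by (rewrite <- W; field; lra).
    apply (Rmult_eq_reg_l (2 * INR n + 3)); [|lra].
    replace ((2 * INR n + 3) * wallis (S (S (S (2 * n)))))
      with ((2 * INR n + 2) * / ((2 * INR n + 1) * central_binom_ratio n)) by lra.
    rewrite WS. field. repeat split; lra.
Qed.

(* Both bounds come from the monotonicity [wallis (S m) <= wallis m] at an even and an odd [m]. *)
Lemma central_binom_ratio_sqr_ge n : 2 / (PI * (2 * INR n + 1)) <= central_binom_ratio n ^ 2.
Proof.
  pose proof (wallis_S_le (2 * n)) as H. rewrite wallis_even, wallis_odd in H.
  pose proof (central_binom_ratio_pos n). pose proof (pos_INR n). pose proof PI_RGT_0.
  set (c := central_binom_ratio n) in *.
  assert (0 < (2 * INR n + 1) * c) by nra.
  apply (Rmult_le_compat_l ((2 * INR n + 1) * c)) in H; [|lra].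
  rewrite Rinv_r in H by lra.
  unfold Rdiv. apply (Rmult_le_reg_r (PI * (2 * INR n + 1))); [nra|].
  rewrite Rmult_assoc, Rinv_l by nra. nra.
Qed.

Lemma central_binom_ratio_sqr_le n : (1 <= n)%nat -> central_binom_ratio n ^ 2 <= / (PI * INR n).
Proof.
  intros Hn. destruct n as [|m]; [lia|].
  pose proof (wallis_S_le (S (2 * m))) as H.
  replace (S (S (2 * m))) with (2 * S m)%nat in H by lia.
  rewrite wallis_even, wallis_odd, <- (Rmult_comm (central_binom_ratio m)),
    <- central_binom_ratio_S in H.
  pose proof (central_binom_ratio_pos (S m)). pose proof (pos_INR m). pose proof PI_RGT_0.
  set (c := central_binom_ratio (S m)) in *. rewrite S_INR.
  assert (0 < c * (2 * INR m + 2)) by nra.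
  apply (Rmult_le_compat_l (c * (2 * INR m + 2))) in H; [|lra].
  rewrite Rinv_r in H by lra.
  apply (Rmult_le_reg_r (PI * (INR m + 1))); [nra|].
  rewrite Rinv_l by nra. nra.
Qed.

Lemma Binom_odd_half m : Binom (S (2 * m)) (S m) = Binom (2 * S m) (S m) / 2.
Proof.
  unfold Binom. replace (2 * S m)%nat with (S (S (2 * m))) by lia.
  rewrite <- (pascal (S (2 * m)) m), (pascal_step1 (S (2 * m)) m) by lia.
  replace (S (2 * m) - m)%nat with (S m) by lia. field.
Qed.

Lemma kern_0 n : (1 <= n)%nat -> kern n 0 = 2 * INR n * central_binom_ratio n ^ 2.
Proof.
  intros Hn. destruct n as [|m]; [lia|].
  unfold kern, central_binom_ratio.
  replace (S m - 0)%nat with (S m) by lia.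
  replace (2 * S m - 1)%nat with (S (2 * m)) by lia.
  rewrite Binom_odd_half.
  assert (P : (2 ^ (2 * S m)) ^ 2 = 4 * 2 ^ (4 * S m - 2)).
  { rewrite <- pow_mult. replace (2 * S m * 2)%nat with (2 + (4 * S m - 2))%nat by lia.
    rewrite pow_add. simpl. ring. }
  pose proof (pow_lt 2 (2 * S m) ltac:(lra)). pose proof (pow_lt 2 (4 * S m - 2) ltac:(lra)).
  field_simplify_eq; [|lra..]. rewrite P. ring.
Qed.

Lemma kern_0_bounds n : (1 <= n)%nat -> 2 / PI - / INR n <= kern n 0 <= 2 / PI.
Proof.
  intros Hn. rewrite kern_0 by exact Hn.
  pose proof (central_binom_ratio_sqr_ge n). pose proof (central_binom_ratio_sqr_le n Hn).
  pose proof PI2_1.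
  assert (HN : 1 <= INR n) by (apply (le_INR 1); exact Hn).
  set (c2 := central_binom_ratio n ^ 2) in *. set (N := INR n) in *.
  split.
  - assert (E : 2 / PI - 2 * N * (2 / (PI * (2 * N + 1))) = 2 / (PI * (2 * N + 1)))
      by (field; lra).
    assert (L : 2 / (PI * (2 * N + 1)) <= / N).
    { replace (/ N) with (2 * / (2 * N)) by (field; lra).
      apply Rmult_le_compat_l, Rinv_le_contravar; nra. }
    assert (2 * N * (2 / (PI * (2 * N + 1))) <= 2 * N * c2) by (apply Rmult_le_compat_l; lra).
    lra.
  - apply Rle_trans with (2 * N * / (PI * N)); [apply Rmult_le_compat_l; lra|].
    right; field; lra.
Qed.

Lemma kern_nonneg n k : (k <= n)%nat -> 0 <= kern n k.
Proof.
  intros Hk. unfold kern.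
  pose proof (pos_INR n). pose proof (pow_lt 2 (4 * n - 2) ltac:(lra)).
  pose proof (Binom_pos (2 * n) n ltac:(lia)).
  pose proof (Binom_pos (2 * n - 1) (n - k) ltac:(lia)).
  apply Rmult_le_pos; [apply Rmult_le_pos|]; [apply Rdiv_le_0_compat| |]; lra.
Qed.

Lemma kern_S n k : (k < n)%nat ->
  kern n (S k) = kern n k * ((INR n - INR k) / (INR n + INR k)).
Proof.
  intros Hk. unfold kern, Binom.
  replace (n - k)%nat with (S (n - S k)) by lia.
  rewrite (pascal_step3 (2 * n - 1) (n - S k)) by lia.
  replace (2 * n - 1 - (n - S k))%nat with (n + k)%nat by lia.
  replace (S (n - S k)) with (n - k)%nat by lia.
  rewrite plus_INR, minus_INR by lia.
  assert (INR k < INR n) by (apply lt_INR; exact Hk).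
  pose proof (pos_INR k). pose proof (pow_lt 2 (4 * n - 2) ltac:(lra)).
  field. lra.
Qed.

Lemma kern_S_ratio_bounds n k : (k < n)%nat ->
  0 <= (INR n - INR k) / (INR n + INR k) <= 1.
Proof.
  intros Hk. assert (INR k < INR n) by (apply lt_INR; exact Hk). pose proof (pos_INR k).
  split; [apply Rdiv_le_0_compat; lra|].
  apply (Rmult_le_reg_r (INR n + INR k)); [lra|].
  unfold Rdiv. rewrite Rmult_assoc, Rinv_l; lra.
Qed.

Lemma kern_le_kern_0 n k : (k <= n)%nat -> kern n k <= kern n 0.
Proof.
  induction k as [|k IH]; intros Hk; [lra|].
  rewrite kern_S by lia.
  pose proof (kern_S_ratio_bounds n k ltac:(lia)). pose proof (kern_nonneg n k ltac:(lia)).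
  specialize (IH ltac:(lia)). nra.
Qed.

Lemma kern_ge_kern_0_mul n k : (1 <= n)%nat -> (k <= n)%nat ->
  kern n 0 * (1 - INR k ^ 2 / INR n) <= kern n k.
Proof.
  intros Hn. induction k as [|k IH]; intros Hk.
  - simpl. unfold Rdiv. lra.
  - rewrite kern_S by lia.
    pose proof (kern_S_ratio_bounds n k ltac:(lia)).
    pose proof (kern_nonneg n 0 ltac:(lia)).
    specialize (IH ltac:(lia)).
    assert (Hkn : INR k < INR n) by (apply lt_INR; lia). pose proof (pos_INR k).
    set (r := (INR n - INR k) / (INR n + INR k)) in *.
    assert (G : 1 - INR (S k) ^ 2 / INR n <= (1 - INR k ^ 2 / INR n) * r).
    { unfold r, Rdiv. rewrite S_INR.
      apply (Rmult_le_reg_r (INR n * (INR n + INR k))); [nra|].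
      field_simplify; [|lra..]. pose proof (pow_le (INR k) 3 ltac:(lra)). nra. }
    apply Rle_trans with (kern n 0 * ((1 - INR k ^ 2 / INR n) * r)).
    + apply Rmult_le_compat_l; lra.
    + rewrite <- Rmult_assoc. apply Rmult_le_compat_r; lra.
Qed.

Lemma kern_defect n k : (1 <= k)%nat -> (k <= n)%nat ->
  0 <= 2 / PI - kern n k <= 2 * Rmin 1 (INR k ^ 2 / INR n).
Proof.
  intros Hk Hkn.
  pose proof (kern_0_bounds n ltac:(lia)). pose proof (kern_le_kern_0 n k Hkn).
  pose proof (kern_ge_kern_0_mul n k ltac:(lia) Hkn). pose proof (kern_nonneg n k Hkn).
  pose proof PI2_1.
  assert (HN : 1 <= INR n) by (apply (le_INR 1); lia).
  assert (HK : 1 <= INR k) by (apply (le_INR 1); lia).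
  assert (Hkern0 : kern n 0 <= 1).
  { apply Rle_trans with (2 / PI); [lra|].
    apply (Rmult_le_reg_r PI); [lra|]. unfold Rdiv. rewrite Rmult_assoc, Rinv_l; lra. }
  assert (Hinv : / INR n <= Rmin 1 (INR k ^ 2 / INR n)).
  { apply Rmin_glb.
    - rewrite <- Rinv_1. apply Rinv_le_contravar; lra.
    - unfold Rdiv. rewrite <- (Rmult_1_l (/ INR n)) at 1.
      apply Rmult_le_compat_r; [apply Rlt_le, Rinv_0_lt_compat; lra | nra]. }
  assert (Hsq : 0 <= INR k ^ 2 / INR n) by (apply Rdiv_le_0_compat; nra).
  assert (kern n 0 - kern n k <= Rmin 1 (INR k ^ 2 / INR n)).
  { apply Rmin_glb; [lra|].
    assert (kern n 0 * (INR k ^ 2 / INR n) <= INR k ^ 2 / INR n)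
      by (rewrite <- (Rmult_1_l (INR k ^ 2 / INR n)) at 2; apply Rmult_le_compat_r; lra).
    nra. }
  split; lra.
Qed.

Lemma kern_defect_le_Rpower th n k : 0 < th <= 1 -> (1 <= k)%nat -> (k <= n)%nat ->
  0 <= 2 / PI - kern n k <= 2 * (Rpower (INR k) (2 * th) * Rpower (INR n) (- th)).
Proof.
  intros Hth Hk Hkn.
  assert (HK : 0 < INR k) by (apply lt_0_INR; lia).
  assert (HN : 0 < INR n) by (apply lt_0_INR; lia).
  destruct (kern_defect n k Hk Hkn) as [H0 H1]. split; [exact H0|].
  replace (Rpower (INR k) (2 * th) * Rpower (INR n) (- th)) with (Rpower (INR k ^ 2 / INR n) th).
  - pose proof (Rmin_1_le_Rpower (INR k ^ 2 / INR n) th ltac:(apply Rdiv_lt_0_compat; nra) Hth).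
    lra.
  - unfold Rpower. rewrite <- exp_plus, ln_div, ln_pow by nra. f_equal. simpl (INR 2). ring.
Qed.

Lemma abs_le_Rpower_of_polylog_bound (a b s Cst : R) (W : nat -> R) : s < b -> 0 < Cst ->
  (forall k : nat, (1 <= k)%nat ->
     Rabs (W k) < Cst * Rpower (ln (2 * INR k + 1)) a / Rpower (INR k) b) ->
  exists M, 0 <= M /\ forall k : nat, (1 <= k)%nat -> Rabs (W k) <= M * Rpower (INR k) (- s).
Proof.
  intros Hs HC hW.
  destruct (Rpower_ln_le_Rpower a (b - s) ltac:(lra)) as [c [Hc Hlog]].
  exists (Cst * c). split; [nra|]. intros k Hk.
  specialize (hW k Hk). specialize (Hlog (INR k) ltac:(apply (le_INR 1); exact Hk)).
  assert (Hpb : 0 < Rpower (INR k) b) by apply exp_pos.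
  apply Rlt_le, (Rlt_le_trans _ _ _ hW).
  unfold Rdiv. apply (Rmult_le_reg_r (Rpower (INR k) b)); [exact Hpb|].
  rewrite Rmult_assoc, Rinv_l, Rmult_1_r by lra.
  replace (Cst * c * Rpower (INR k) (- s) * Rpower (INR k) b)
    with (Cst * (c * Rpower (INR k) (b - s)))
    by (replace (b - s) with (- s + b) by ring; rewrite Rpower_plus; ring).
  apply Rmult_le_compat_l; lra.
Qed.

Theorem lemma3p6 (a b Cst : R) (W : nat -> R)
  (hb : 1 < b) (hC : 0 < Cst)
  (hW : forall k : nat, (1 <= k)%nat ->
          Rabs (W k) < Cst * Rpower (ln (2 * INR k + 1)) a / Rpower (INR k) b) :
  is_lim_seq
    (fun n : nat => sum_n_m (fun k : nat => Rabs (W k) * (2 / PI - kern n k)) 1 n)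
    0.
Proof.
  set (e := Rmin (b - 1) 1 / 4).
  assert (He : 0 < e <= 1 /\ 1 + 3 * e < b).
  { pose proof (Rmin_l (b - 1) 1). pose proof (Rmin_r (b - 1) 1).
    assert (0 < Rmin (b - 1) 1) by (apply Rmin_glb_lt; lra). unfold e; lra. }
  destruct (abs_le_Rpower_of_polylog_bound a b (1 + 3 * e) Cst W ltac:(lra) hC hW)
    as [M [HM HWM]].
  apply (is_lim_seq_sum_n_m_dominated _ (fun n => 2 * M * Rpower (INR n) (- e))
           (fun k => Rpower (INR k) (- (1 + e))) (1 + / e)).
  - intros n k Hk.
    destruct (kern_defect_le_Rpower e n k ltac:(lra) ltac:(lia) ltac:(lia)) as [D0 D1].
    specialize (HWM k ltac:(lia)). pose proof (Rabs_pos (W k)).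
    split; [apply Rmult_le_pos; lra|].
    replace (2 * M * Rpower (INR n) (- e) * Rpower (INR k) (- (1 + e)))
      with (M * Rpower (INR k) (- (1 + 3 * e))
            * (2 * (Rpower (INR k) (2 * e) * Rpower (INR n) (- e))))
      by (replace (- (1 + e)) with (- (1 + 3 * e) + 2 * e) by ring; rewrite Rpower_plus; ring).
    apply Rmult_le_compat; lra.
  - intros n. apply sum_Rpower_le; lra.
  - intros n. pose proof (exp_pos (- e * ln (INR n))). unfold Rpower. nra.
  - replace (Finite 0) with (Rbar_mult (2 * M) 0) by (simpl; f_equal; ring).
    apply is_lim_seq_scal_l, is_lim_seq_Rpower_neg; lra.
Qed.
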